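(* Let $Y_t$ be a random variable taking values in a measurement space $\mathcal Y$, with distribution $p_{y,t}$, and let $p\in(0,1)$ and $\delta\in(0,1)$. Consider the following two cases. (Categorical case) $\mathcal Y$ is a finite set of cardinality $N$. Define $\mathcal R_{t,p}:=\{y\in\mathcal Y : p_{y,t}(\{y\})\ge p\}$. ($\gamma$-quantized case) $\mathcal Y\subset\mathbb R^n$ is bounded, $\gamma>0$, and $\mathcal Y_q$ is a minimal cover of $\mathcal Y$ by closed $\ell_\infty$-balls of radius $\gamma/2$ (called bins), with $N:=|\mathcal Y_q|$ finite (the covering number). Define $\mathcal R^{\gamma}_{t,p}:=\{y : \exists\, y_{\mathrm{bin}}\in\mathcal Y_q \text{ with } y\in y_{\mathrm{bin}} \text{ and } p_{y,t}(y_{\mathrm{bin}})\ge p\}$. Let $y_1,\dots,y_m$ be $m$ i.i.d. samples drawn from the distribution of $Y_t$. If $$ m\ \ge\ \max\left(N,\ \frac{\log(\delta/N)}{\log(1-p)}\right), $$ then $\mathbb P\big(\mathcal R^{(\gamma)}_{t,p}\subset \hat{\mathcal R}_t\big)\ge 1-\delta$, where in the categorical case $\mathcal R^{(\gamma)}_{t,p}=\mathcal R_{t,p}$ and $\hat{\mathcal R}_t=\{y_i\}_{i=1}^m$, and in the $\gamma$-quantized case $\mathcal R^{(\gamma)}_{t,p}=\mathcal R^{\gamma}_{t,p}$ and $\hat{\mathcal R}_t=\bigcup_{i=1}^m \mathcal B_\infty(y_i,\gamma)$, with $\mathcal B_\infty(y_i,\gamma)$ the closed $\ell_\infty$-ball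 centered at $y_i$ of radius $\gamma$.
   Context: Setting: $Y_t=h(X_t)$ is the measurement value at time $t$ of a (possibly stochastic) discrete-time control system (''dialogue process'') in which the initial state $X_0$ is drawn from a distribution $p_0$, the inputs are drawn from input distributions, and $h$ is a deterministic readout map into $\mathcal Y$; $p_{y,t}$ denotes the resulting (pushforward) distribution of $Y_t$. The theorem only uses that $y_1,\dots,y_m$ are i.i.d. draws of $Y_t$. The set $\mathcal R^{(\gamma)}_{t,p}$ is called the $p$-approximate (respectively $(p,\gamma)$-approximate) reachable set at time $t$. *)

From HB Require Import structures.
From mathcomp Require Import all_boot all_order all_algebra.
From mathcomp Require Import all_classical all_reals all_analysis.
Set Implicit Arguments. Unset Strict Implicit. Unset Printing Implicit Defensive.
Import Order.TTheory GRing.Theory Num.Theory.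
Local Open Scope classical_set_scope.
Local Open Scope ring_scope.

(* Points of R^n are n-tuples of reals (with the canonical product sigma-algebra
   of mathcomp-analysis on n.-tuple R). *)

Definition linf_ball (R : realType) (n : nat) (c : n.-tuple R) (r : R)
  : set (n.-tuple R) :=
  [set x | forall i : 'I_n, `|tnth x i - tnth c i| <= r].

Definition linf_bounded (R : realType) (n : nat) (Y : set (n.-tuple R)) : Prop :=
  exists M : R, forall y, Y y -> forall i : 'I_n, `|tnth y i| <= M.

Definition linf_cover (R : realType) (n : nat) (Y : set (n.-tuple R)) (r : R)
  (k : nat) (c : 'I_k -> n.-tuple R) : Prop :=
  Y `<=` \bigcup_(j in [set: 'I_k]) linf_ball (c j) r.

Definition min_linf_cover (R : realType) (n : nat) (Y : set (n.-tuple R)) (r : R)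
  (N : nat) (c : 'I_N -> n.-tuple R) : Prop :=
  linf_cover Y r c /\
  forall (k : nat) (c' : 'I_k -> n.-tuple R), linf_cover Y r c' -> (N <= k)%N.

Definition iid_sample d dT (Omega : measurableType d) (T : measurableType dT)
  (R : realType) (P : probability Omega R) (mu : probability T R) (m : nat)
  (X : 'I_m -> Omega -> T) : Prop :=
  [/\ (forall i, measurable_fun setT (X i)),
      (forall i (A : set T), measurable A -> P (X i @^-1` A) = mu A) &
      (forall A : 'I_m -> set T, (forall i, measurable (A i)) ->
         P (\bigcap_(i in [set: 'I_m]) (X i @^-1` A i)) =
         (\prod_(i < m) P (X i @^-1` A i))%E)].

(* For a cell (a category, or a bin of the cover) of mass at least p, the m
   i.i.d. samples all miss it with probability at most (1 - p)^m.  There are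
   at most N such cells, so by the union bound some heavy cell is missed with
   probability at most N (1 - p)^m, which the choice of m makes at most delta.
   In the quantized case, a sample falling in the bin of radius gamma/2 that
   contains y lies within gamma of y. *)

From HB Require Import structures.
From mathcomp Require Import all_boot all_order all_algebra.
From mathcomp Require Import all_classical all_reals all_analysis.
From mathcomp Require Import measurable_realfun.
Set Implicit Arguments. Unset Strict Implicit. Unset Printing Implicit Defensive.
Import Order.TTheory GRing.Theory Num.Theory.
Local Open Scope classical_set_scope.
Local Open Scope ring_scope.

Lemma sample_size_union_bound (R : realType) (p delta : R) (N m : nat) :
  0 < p < 1 -> 0 < delta ->
  ln (delta / N%:R) / ln (1 - p) <= m%:R ->
  N%:R * (1 - p) ^+ m <= delta.
Proof.
move=> /andP[p_gt0 p_lt1] delta_gt0 m_ge.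
have [->|N_neq0] := eqVneq N 0%N; first by rewrite mul0r ltW.
have N_gt0 : 0 < N%:R :> R by rewrite ltr0n lt0n.
have q_gt0 : 0 < 1 - p by rewrite subr_gt0.
have ln_q_lt0 : ln (1 - p) < 0 by rewrite ln_lt0 // q_gt0 /= ltrBlDr ltrDl.
have : ln ((1 - p) ^+ m) <= ln (delta / N%:R).
  by rewrite lnXn // -[ln _ *+ _]mulr_natl -ler_ndivrMr.
rewrite ler_ln ?posrE ?exprn_gt0 ?divr_gt0 //.
by rewrite ler_pdivlMr // mulrC.
Qed.

Section finite_samples.
Variables (R : numDomainType) (T : finType) (m : nat).

Lemma sum_prod_ffun (f : T -> R) :
  \sum_(s : {ffun 'I_m -> T}) \prod_(i < m) f (s i) = (\sum_(y : T) f y) ^+ m.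
Proof.
by rewrite -(bigA_distr_bigA (fun (_ : 'I_m) y => f y)) prodr_const card_ord.
Qed.

Variable q : T -> R.
Hypotheses (q_ge0 : forall y, 0 <= q y) (q_sum1 : \sum_(y : T) q y = 1).

Local Notation weight s := (\prod_(i < m) q (s i)).
Local Notation hits s y := (y \in [set s i | i : 'I_m]%SET).

Lemma weight_samples_missing (y : T) :
  \sum_(s : {ffun 'I_m -> T} | ~~ hits s y) weight s = (1 - q y) ^+ m.
Proof.
pose q_y z := if z == y then 0 else q z.
have sum_q_y : \sum_z q_y z = 1 - q y.
  rewrite -q_sum1 (bigD1 y) //= [in RHS](bigD1 y) //= /q_y eqxx.
  rewrite add0r addrAC subrr add0r.
  by apply: eq_bigr => z /negbTE ->.
rewrite -sum_q_y -sum_prod_ffun [LHS]big_mkcond /=; apply: eq_bigr => s _.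
case: imsetP => [[i _ y_si]|s_miss] /=.
  by apply/esym/eqP/prodf_eq0; exists i => //; rewrite /q_y -y_si eqxx.
apply: eq_bigr => i _; rewrite /q_y; case: eqP => // si_y.
by case: s_miss; exists i.
Qed.

Lemma weight_samples_not_covering (S : {set T}) :
  \sum_(s : {ffun 'I_m -> T} | ~~ (S \subset [set s i | i : 'I_m]%SET)) weight s
  <= \sum_(y in S) (1 - q y) ^+ m.
Proof.
have weight_ge0 s : 0 <= weight s by exact: prodr_ge0.
under [leRHS]eq_bigr => y _ do rewrite -weight_samples_missing big_mkcond.
rewrite exchange_big /= [leLHS]big_mkcond; apply: ler_sum => s _.
have cond_ge0 y : 0 <= (if ~~ hits s y then weight s else 0) by case: ifP.
case: ifPn => [/subsetPn[y yS s_miss_y]|_]; last exact: sumr_ge0.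
by rewrite (bigD1 y) //= s_miss_y lerDl sumr_ge0.
Qed.

Lemma weight_samples_covering (p : R) : p <= 1 ->
  1 - #|T|%:R * (1 - p) ^+ m <=
  \sum_(s : {ffun 'I_m -> T} |
      [set y | p <= q y]%SET \subset [set s i | i : 'I_m]%SET) weight s.
Proof.
move=> p_le1; set S := [set y | p <= q y]%SET.
have q_le1 y : q y <= 1 by rewrite -q_sum1 (bigD1 y) //= lerDl sumr_ge0.
have miss_heavy : \sum_(y in S) (1 - q y) ^+ m <= #|T|%:R * (1 - p) ^+ m.
  apply: le_trans (_ : \sum_(y in S) (1 - p) ^+ m <= _).
    apply: ler_sum => y; rewrite inE => p_le_qy.
    by apply: lerXn2r; rewrite ?nnegrE ?subr_ge0 ?lerD2l ?lerN2.
  rewrite sumr_const -[leLHS]mulr_natl.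
  apply: ler_wpM2r; first by rewrite exprn_ge0 ?subr_ge0.
  by rewrite ler_nat max_card.
have total : \sum_(s : {ffun 'I_m -> T}) weight s = 1.
  by rewrite sum_prod_ffun q_sum1 expr1n.
rewrite -[X in X - _ <= _]total.
rewrite (bigID (fun s : {ffun 'I_m -> T} => S \subset [set s i | i : 'I_m]%SET)) /=.
by rewrite lerBlDr lerD2l (le_trans (weight_samples_not_covering S)).
Qed.

End finite_samples.

Lemma linf_ball_measurable (R : realType) (n : nat) (c : n.-tuple R) (r : R) :
  measurable (linf_ball c r).
Proof.
have -> : linf_ball c r = \bigcap_(i in [set: 'I_n])
    ((fun x : n.-tuple R => `|tnth x i - tnth c i|) @^-1` `]-oo, r]).
  apply/seteqP; split => x /= x_ball i; first by rewrite /= in_itv /= x_ball.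
  by have := x_ball i I; rewrite /= in_itv.
apply: fin_bigcap_measurable; first exact: finite_finset.
move=> i _; rewrite -[X in measurable X]setTI.
have dist_meas : measurable_fun setT (fun x : n.-tuple R => `|tnth x i - tnth c i|).
  apply: measurableT_comp => //.
  by apply: measurable_funB => //; exact: measurable_tnth.
exact: dist_meas (measurable_itv _).
Qed.

Lemma linf_ball_sub_double (R : realType) (n : nat) (c x : n.-tuple R) (r : R) :
  linf_ball c r x -> linf_ball c r `<=` linf_ball x (r + r).
Proof.
move=> x_ball y y_ball i.
have -> : tnth y i - tnth x i = (tnth y i - tnth c i) - (tnth x i - tnth c i).
  by rewrite opprB addrA subrK.
exact: le_trans (ler_normB _ _) (lerD (y_ball i) (x_ball i)).
Qed.

Lemma lee_fsum_card (R : realType) (I : finType) (D : set I)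
    (f : I -> \bar R) (e : R) :
  0 <= e -> (forall i, D i -> f i <= e%:E)%E ->
  (\sum_(i \in D) f i <= (#|I|%:R * e)%:E)%E.
Proof.
move=> e_ge0 f_le.
apply: (@le_trans _ _ (\sum_(i \in D) e%:E)%E).
  by apply: lee_fsum => //; exact: finite_finset.
rewrite fsbig_finite ?finite_finset //= sumEFin lee_fin big_const_seq count_predT.
rewrite iter_addr_0 -[e *+ _]mulr_natl; apply: ler_wpM2r => //.
rewrite ler_nat cardE.
by apply: uniq_leq_size => [|x _]; [exact: finmap.fset_uniq | exact: mem_enum].
Qed.

Lemma measure_fin_bigcup_le_card d (T : measurableType d) (R : realType)
    (mu : {measure set T -> \bar R}) (I : finType) (D : set I)
    (A : I -> set T) (e : R) :
  0 <= e -> (forall i, D i -> measurable (A i)) ->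
  (forall i, D i -> mu (A i) <= e%:E)%E ->
  (mu (\bigcup_(i in D) A i) <= (#|I|%:R * e)%:E)%E.
Proof.
move=> e_ge0 A_meas A_le.
apply: le_trans (lee_fsum_card e_ge0 A_le).
apply: content_sub_fsum => //; first exact: finite_finset.
by apply: fin_bigcup_measurable => //; exact: finite_finset.
Qed.

Section iid_samples.
Context d dT (Omega : measurableType d) (T : measurableType dT) (R : realType).
Variables (P : probability Omega R) (mu : probability T R) (m : nat).
Variable X : 'I_m -> Omega -> T.
Hypothesis iidX : iid_sample P mu X.

Lemma iid_sample_preimage_measurable i (A : set T) :
  measurable A -> measurable (X i @^-1` A).
Proof.
by case: iidX => X_meas _ _ A_meas; rewrite -[X in measurable X]setTI; apply: X_meas.
Qed.

Lemma iid_sample_miss_le (A : set T) (p : R) :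
  measurable A -> (p%:E <= mu A)%E ->
  (P (\bigcap_(i in [set: 'I_m]) X i @^-1` ~` A) <= ((1 - p) ^+ m)%:E)%E.
Proof.
case: iidX => _ X_law X_indep A_meas p_le_muA.
have muA_fin : mu A \is a fin_num by exact: fin_num_measure.
have muA_le1 : fine (mu A) <= 1 by rewrite -lee_fin fineK // probability_le1.
have p_le : p <= fine (mu A) by rewrite -lee_fin fineK.
rewrite X_indep => [|i]; last exact: measurableC.
rewrite (eq_bigr (fun=> (1 - mu A)%E)) => [|i _]; last first.
  by rewrite X_law ?probability_setC //; exact: measurableC.
rewrite -(fineK muA_fin) -EFinB prodEFin lee_fin prodr_const card_ord.
apply: lerXn2r; rewrite ?nnegrE ?subr_ge0 ?lerD2l ?lerN2 //.
exact: le_trans p_le muA_le1.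
Qed.

Lemma iid_sample_hits_heavy_bins (N : nat) (B : 'I_N -> set T) (p : R) :
  p <= 1 -> (forall j, measurable (B j)) ->
  exists E : set Omega, [/\ measurable E,
    E `<=` [set w | forall j, (p%:E <= mu (B j))%E -> exists i, B j (X i w)] &
    ((1 - N%:R * (1 - p) ^+ m)%:E <= P E)%E].
Proof.
move=> p_le1 B_meas; set heavy := [set j | (p%:E <= mu (B j))%E].
pose miss j := \bigcap_(i in [set: 'I_m]) X i @^-1` ~` B j.
have miss_meas j : measurable (miss j).
  apply: fin_bigcap_measurable; first exact: finite_finset.
  by move=> i _; apply: iid_sample_preimage_measurable; exact: measurableC.
have bad_meas : measurable (\bigcup_(j in heavy) miss j).
  by apply: fin_bigcup_measurable => //; exact: finite_finset.
exists (~` \bigcup_(j in heavy) miss j); split; first exact: measurableC.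
  move=> w /= w_good j j_heavy; apply: contrapT => no_hit.
  by apply: w_good; exists j => // i _ /= hit; apply: no_hit; exists i.
have bad_le : (P (\bigcup_(j in heavy) miss j) <= (N%:R * (1 - p) ^+ m)%:E)%E.
  have := @measure_fin_bigcup_le_card _ _ _ P _ heavy miss ((1 - p) ^+ m).
  rewrite card_ord; apply => [|j _|j]; rewrite ?exprn_ge0 ?subr_ge0 //.
  exact: iid_sample_miss_le.
rewrite probability_setC //.
have bad_fin : P (\bigcup_(j in heavy) miss j) \is a fin_num by exact: fin_num_measure.
by rewrite -(fineK bad_fin) -EFinB lee_fin lerD2l lerN2 -lee_fin fineK.
Qed.

End iid_samples.

Theorem theorem1 (R : realType) (p delta : R)
  (hp : 0 < p < 1) (hdelta : 0 < delta < 1) :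
  (* Categorical case: Y = T finite, N = #|T|, q = p_{y,t} is the pmf of Y_t;
     the probability of an event of the i.i.d. sample (y_1..y_m) is the sum
     of the product weights over the samples realizing it. *)
  (forall (T : finType) (q : T -> R),
     (forall y, 0 <= q y) -> \sum_(y : T) q y = 1 ->
     forall m : nat,
     (#|T|%:R <= m%:R :> R) ->
     ln (delta / #|T|%:R) / ln (1 - p) <= m%:R ->
     1 - delta <=
       \sum_(s : {ffun 'I_m -> T} |
               [set y | p <= q y]%SET \subset [set s i | i : 'I_m]%SET) \prod_(i < m) q (s i))
  /\
  (* gamma-quantized case *)
  (forall (n : nat) (Y : set (n.-tuple R)) (gamma : R),
     linf_bounded Y -> 0 < gamma ->
     forall (N : nat) (c : 'I_N -> n.-tuple R),
     min_linf_cover Y (gamma / 2) c ->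
     forall (mu : probability (n.-tuple R) R)
            (d : measure_display) (Omega : measurableType d)
            (P : probability Omega R) (m : nat) (X : 'I_m -> Omega -> n.-tuple R),
     iid_sample P mu X ->
     (forall i w, Y (X i w)) ->
     (N%:R <= m%:R :> R) ->
     ln (delta / N%:R) / ln (1 - p) <= m%:R ->
     let Rgp := [set y | exists j : 'I_N,
                   linf_ball (c j) (gamma / 2) y /\ (p%:E <= mu (linf_ball (c j) (gamma / 2)))%E] in
     exists E : set Omega, [/\ measurable E,
       E `<=` [set w | Rgp `<=` \bigcup_(i in [set: 'I_m]) linf_ball (X i w) gamma] &
       ((1 - delta)%:E <= P E)%E]).
Proof.
have [_ p_lt1] := andP hp.
have [delta_gt0 _] := andP hdelta.
have failure_le N m := @sample_size_union_bound R p delta N m hp delta_gt0.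
split=> [T q q_ge0 q_sum1 m _ m_ge|n Y gamma _ _ N c _ mu d Omega P m X iidX _ _ m_ge].
  apply: le_trans (weight_samples_covering m q_ge0 q_sum1 (ltW p_lt1)).
  by rewrite lerD2l lerN2 failure_le.
move=> Rgp.
have [E [E_meas E_hits E_prob]] := iid_sample_hits_heavy_bins iidX (ltW p_lt1)
  (fun j => linf_ball_measurable (c j) (gamma / 2)).
exists E; split => // [w /E_hits w_hits y [j [y_bin j_heavy]]|].
  have [i Xi_bin] := w_hits j j_heavy.
  by exists i => //; rewrite [gamma]splitr; exact: linf_ball_sub_double Xi_bin _ y_bin.
by apply: le_trans E_prob; rewrite lee_fin lerD2l lerN2 failure_le.
Qed.
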